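(* Let $R$ be a ring, $S\in\mathrm{Den}_l(R,\mathfrak a)$, $\pi:R\to R/\mathfrak a$, $a\mapsto a+\mathfrak a$, and $\sigma:R\to S^{-1}R$, $r\mapsto r/1$ (so $R/\mathfrak a$ is identified with the subring $\sigma(R)$ of $S^{-1}R$). (1) Let $T\in\mathrm{Den}_l(S^{-1}R,0)$ be such that $\sigma(S)\subseteq T$ and $\{\sigma(s)^{-1}\mid s\in S\}\subseteq T$. Then $T':=\sigma^{-1}(T)\in\mathrm{Den}_l(R,\mathfrak a)$, $T'$ is $S$-saturated, $T=\{\sigma(s)^{-1}\sigma(t')\mid s\in S, t'\in T'\}$, the natural ring homomorphism $S^{-1}R\to T'^{-1}R$ is injective, and $T'^{-1}R\cong T^{-1}(S^{-1}R)$ naturally. (2) $\pi^{-1}(S_0(R/\mathfrak a))=S_{\mathfrak a}(R)$, $\pi(S_{\mathfrak a}(R))=S_0(R/\mathfrak a)$, and $Q_{\mathfrak a}(R):=S_{\mathfrak a}(R)^{-1}R\cong Q_l(R/\mathfrak a)$.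
   Context: Rings are associative with $1$. A multiplicatively closed subset $S$ ($1\in S$, $0\notin S$, closed under products) is a left Ore set if $Sr\cap Rs\ne\emptyset$ for all $r\in R,s\in S$; $\mathrm{ass}(S):=\{r\mid sr=0\text{ for some }s\in S\}$; it is a left denominator set if moreover $rs=0$ ($s\in S$) implies $tr=0$ for some $t\in S$. $\mathrm{Den}_l(R,\mathfrak a)$ is the set of left denominator sets $S$ with $\mathrm{ass}(S)=\mathfrak a$; it has a largest element under inclusion, $S_{\mathfrak a}(R)$. $S_0(A)$ denotes the largest element of $\mathrm{Den}_l(A,0)$ for a ring $A$, and $Q_l(A):=S_0(A)^{-1}A$. For $S,T'\in\mathrm{Den}_l(R)$, $T'$ is $S$-saturated if $sr\in T'$ ($s\in S,r\in R$) implies $r\in T'$, and $r's'\in T'$ ($s'\in S,r'\in R$) implies $r'\in T'$. *)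

From HB Require Import structures.
From mathcomp Require Import all_boot all_algebra.
Set Implicit Arguments. Unset Strict Implicit. Unset Printing Implicit Defensive.
Import GRing.Theory.
Local Open Scope ring_scope.

Definition mult_closed (R : nzRingType) (S : R -> Prop) : Prop :=
  S 1 /\ ~ S 0 /\ (forall x y, S x -> S y -> S (x * y)).

Definition left_ore (R : nzRingType) (S : R -> Prop) : Prop :=
  mult_closed S /\
  (forall r s, S s -> exists s' r', S s' /\ s' * r = r' * s).

Definition ass (R : nzRingType) (S : R -> Prop) (r : R) : Prop :=
  exists s, S s /\ s * r = 0.

Definition left_den (R : nzRingType) (S : R -> Prop) : Prop :=
  left_ore S /\
  (forall r s, S s -> r * s = 0 -> exists t, S t /\ t * r = 0).

Definition Den_l (R : nzRingType) (a : R -> Prop) (S : R -> Prop) : Prop :=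
  left_den S /\ (forall r, ass S r <-> a r).

Definition largest_Den_l (R : nzRingType) (a : R -> Prop) (S : R -> Prop) : Prop :=
  Den_l a S /\ (forall S', Den_l a S' -> forall x, S' x -> S x).

Definition S_saturated (R : nzRingType) (S T' : R -> Prop) : Prop :=
  (forall s r, S s -> T' (s * r) -> T' r) /\
  (forall s r, S s -> T' (r * s) -> T' r).

(* (Q, sigma) is a left ring of fractions S^{-1}R of R at S:
   sigma(s) is a unit for s in S, every element is sigma(s)^{-1} sigma(r),
   and ker sigma = ass(S). *)
Definition is_left_loc (R : nzRingType) (S : R -> Prop) (Q : unitRingType)
  (sigma : {rmorphism R -> Q}) : Prop :=
  (forall s, S s -> sigma s \is a GRing.unit) /\
  (forall q : Q, exists s r, S s /\ q = (sigma s)^-1 * sigma r) /\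
  (forall r, sigma r = 0 <-> ass S r).

From HB Require Import structures.
From mathcomp Require Import all_boot all_algebra.
From Stdlib Require Import ClassicalEpsilon.
Import GRing.Theory.
Local Open Scope ring_scope.

(* If f : R -> B has kernel a and every element of B is a left fraction
   f(s)^-1 f(r) with s in S, then the preimage under f of a left denominator
   set of B with trivial ass lies in Den_l(R, a).  Applied to sigma this gives
   (1); applied to pi, together with the fact that pi maps Den_l(R, a) into
   Den_l(R/a, 0), it shows that pi^-1 and pi exchange the largest sets S_a(R)
   and S_0(R/a), which is (2).  The ring isomorphisms then come from the
   uniqueness of left rings of fractions, once T^-1(S^-1 R) and
   S_0(R/a)^-1(R/a) are recognized as left rings of fractions of R at T' and
   at S_a(R) respectively. *)

Section FractionArithmetic.

Variables (R : nzRingType) (B : unitRingType) (h : {rmorphism R -> B}).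

Lemma eq_frac s1 r1 s2 r2 s' r' :
  h s' \is a GRing.unit -> h s1 \is a GRing.unit -> h s2 \is a GRing.unit ->
  s' * s2 = r' * s1 ->
  (h s1)^-1 * h r1 = (h s2)^-1 * h r2 <-> h (r' * r1) = h (s' * r2).
Proof.
move=> u' u1 u2 e.
have u : h (s' * s2) \is a GRing.unit by rewrite rmorphM unitrMl.
have E1 : h (s' * s2) * ((h s1)^-1 * h r1) = h (r' * r1).
  by rewrite e !rmorphM mulrA mulrK.
have E2 : h (s' * s2) * ((h s2)^-1 * h r2) = h (s' * r2).
  by rewrite !rmorphM mulrA mulrK.
by split=> [e12 | e12]; [rewrite -E1 -E2 e12 | apply: (mulrI u); rewrite E1 E2].
Qed.

Lemma add_frac s1 r1 s2 r2 s' r' :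
  h s' \is a GRing.unit -> h s1 \is a GRing.unit -> h s2 \is a GRing.unit ->
  s' * s2 = r' * s1 ->
  (h s1)^-1 * h r1 + (h s2)^-1 * h r2 = (h (s' * s2))^-1 * h (r' * r1 + s' * r2).
Proof.
move=> u' u1 u2 e.
have u : h (s' * s2) \is a GRing.unit by rewrite rmorphM unitrMl.
apply: (mulrI u); rewrite mulrA mulrV // mul1r mulrDr.
rewrite {1}e !rmorphM !mulrA -(mulrA _ (h s1)) mulrV // mulr1.
by rewrite -(mulrA _ (h s2)) mulrV // mulr1 rmorphD !rmorphM.
Qed.

Lemma mul_frac s1 r1 s2 r2 s' r' :
  h s' \is a GRing.unit -> h s1 \is a GRing.unit -> h s2 \is a GRing.unit ->
  s' * r1 = r' * s2 ->
  (h s1)^-1 * h r1 * ((h s2)^-1 * h r2) = (h (s' * s1))^-1 * h (r' * r2).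
Proof.
move=> u' u1 u2 e.
have u : h (s' * s1) \is a GRing.unit by rewrite rmorphM unitrMl.
apply: (mulrI u); rewrite [RHS]mulrA mulrV // mul1r rmorphM.
rewrite !mulrA -(mulrA _ (h s1)) mulrV // mulr1 -rmorphM e rmorphM.
by rewrite -(mulrA _ (h s2)) mulrV // mulr1 rmorphM.
Qed.

End FractionArithmetic.

Arguments eq_frac {R B} h {s1 r1 s2 r2 s' r'}.
Arguments add_frac {R B} h {s1 r1 s2 r2 s' r'}.
Arguments mul_frac {R B} h {s1 r1 s2 r2 s' r'}.

Section UniversalProperty.

Variables (R : nzRingType) (S : R -> Prop) (Q : unitRingType).
Variable sg : {rmorphism R -> Q}.
Hypothesis hQ : is_left_loc S sg.

Lemma eq_left_loc_morph (B : unitRingType) (g1 g2 : {rmorphism Q -> B}) :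
  (forall r, g1 (sg r) = g2 (sg r)) -> g1 =1 g2.
Proof.
have [su [sfrac _]] := hQ; move=> e q; have [s [r [hs ->]]] := sfrac q.
by rewrite !rmorphM !rmorphV ?su // !e.
Qed.

Lemma left_loc_lift_inj (B : unitRingType) (f : {rmorphism R -> B})
    (g : {rmorphism Q -> B}) :
  (forall s, S s -> f s \is a GRing.unit) -> (forall r, f r = 0 -> ass S r) ->
  (forall r, g (sg r) = f r) -> injective g.
Proof.
have [su [sfrac sker]] := hQ; move=> fu fker gE.
suff g_eq0 q : g q = 0 -> q = 0.
  move=> q1 q2 e; apply/eqP; rewrite -subr_eq0; apply/eqP/g_eq0.
  by rewrite rmorphB e subrr.
have [s [r [hs ->]]] := sfrac q.
rewrite rmorphM rmorphV ?su // !gE => /(congr1 (GRing.mul (f s))).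
by rewrite mulVKr ?fu // mulr0 => /fker/sker ->; rewrite mulr0.
Qed.

Hypothesis hS : left_ore S.

Lemma left_loc_lift (B : unitRingType) (f : {rmorphism R -> B}) :
  (forall s, S s -> f s \is a GRing.unit) -> (forall r, ass S r -> f r = 0) ->
  exists g : {rmorphism Q -> B}, forall r, g (sg r) = f r.
Proof.
have [[S1 [_ SM]] SO] := hS; have [su [sfrac sker]] := hQ; move=> fu fker.
have frac_wd s1 r1 s2 r2 : S s1 -> S s2 ->
    (sg s1)^-1 * sg r1 = (sg s2)^-1 * sg r2 -> (f s1)^-1 * f r1 = (f s2)^-1 * f r2.
  move=> h1 h2; have [s' [r' [h' e]]] := SO s2 s1 h1.
  move/(eq_frac sg (su _ h') (su _ h1) (su _ h2) e) => e'.
  apply/(eq_frac f (fu _ h') (fu _ h1) (fu _ h2) e)/eqP.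
  rewrite -subr_eq0 -rmorphB fker //; apply/sker.
  by rewrite rmorphB e' subrr.
have rep q : {p : R * R | S p.1 /\ q = (sg p.1)^-1 * sg p.2}.
  apply: constructive_indefinite_description.
  by have [s [r [hs e]]] := sfrac q; exists (s, r).
pose g q := (f (sval (rep q)).1)^-1 * f (sval (rep q)).2.
have gE s r : S s -> g ((sg s)^-1 * sg r) = (f s)^-1 * f r.
  by move=> hs; rewrite /g; case: (rep _) => [[s0 r0] [/= h0 e0]]; apply: frac_wd.
have g_sg r : g (sg r) = f r.
  by rewrite -[sg r]mul1r -invr1 -(rmorph1 sg) gE // rmorph1 invr1 mul1r.
have g_add : nmod_morphism g.
  split=> [|q1 q2]; first by rewrite -(rmorph0 sg) g_sg rmorph0.
  have [s1 [r1 [h1 ->]]] := sfrac q1; have [s2 [r2 [h2 ->]]] := sfrac q2.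
  have [s' [r' [h' e]]] := SO s2 s1 h1; have hd := SM _ _ h' h2.
  rewrite (add_frac sg (su _ h') (su _ h1) (su _ h2) e) !gE //.
  by rewrite (add_frac f (fu _ h') (fu _ h1) (fu _ h2) e).
have g_mul : GRing.monoid_morphism g.
  split=> [|q1 q2]; first by rewrite -(rmorph1 sg) g_sg rmorph1.
  have [s1 [r1 [h1 ->]]] := sfrac q1; have [s2 [r2 [h2 ->]]] := sfrac q2.
  have [s' [r' [h' e]]] := SO r1 s2 h2; have hd := SM _ _ h' h1.
  rewrite (mul_frac sg (su _ h') (su _ h1) (su _ h2) e) !gE //.
  by rewrite (mul_frac f (fu _ h') (fu _ h1) (fu _ h2) e).
pose gR : {rmorphism Q -> B} :=
  HB.pack g (GRing.isNmodMorphism.Build _ _ g g_add)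
    (GRing.isMonoidMorphism.Build _ _ g g_mul).
by exists gR.
Qed.

End UniversalProperty.

Arguments eq_left_loc_morph {R S Q sg} hQ {B} g1 g2.
Arguments left_loc_lift_inj {R S Q sg} hQ {B f g}.
Arguments left_loc_lift {R S Q sg} hQ hS {B} f.

Lemma left_loc_unique (R : nzRingType) (S : R -> Prop) (hS : left_ore S)
    (Q1 : unitRingType) (sg1 : {rmorphism R -> Q1}) (h1 : is_left_loc S sg1)
    (Q2 : unitRingType) (sg2 : {rmorphism R -> Q2}) (h2 : is_left_loc S sg2) :
  exists phi : {rmorphism Q1 -> Q2}, bijective phi /\ forall r, phi (sg1 r) = sg2 r.
Proof.
have [phi phiE] := left_loc_lift h1 hS sg2 h2.1 (fun r => (h2.2.2 r).2).
have [chi chiE] := left_loc_lift h2 hS sg1 h1.1 (fun r => (h1.2.2 r).2).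
exists phi; split=> //; exists chi.
  by apply: (eq_left_loc_morph h1 (chi \o phi) idfun) => r /=; rewrite phiE chiE.
by apply: (eq_left_loc_morph h2 (phi \o chi) idfun) => r /=; rewrite chiE phiE.
Qed.

Arguments left_loc_unique {R S} hS {Q1 sg1} h1 {Q2 sg2} h2.

Section Preimage.

Variables (R B : nzRingType) (f : {rmorphism R -> B}) (a S : R -> Prop).
Variable T : B -> Prop.
Hypotheses (hS : Den_l a S) (hT : Den_l (fun b => b = 0) T).
Hypotheses (f_ker : forall r, f r = 0 <-> a r) (f_ST : forall s, S s -> T (f s)).
Hypothesis f_frac : forall b, exists s r, S s /\ f s * b = f r.

Lemma Den_l_preimage : Den_l a (fun r => T (f r)).
Proof.
have [[[[_ [_ SM]] SO] _] SA] := hS; have [[[[T1 [T0 TM]] TO] TL] TA] := hT.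
have T_SM s x : S s -> T x -> T (f s * x) by move/f_ST; apply: TM.
split; last first.
  move=> r; split=> [[t [ht e]] | /SA [s [hs e]]].
    by apply/f_ker/TA; exists (f t); rewrite -rmorphM e rmorph0.
  by exists s; split; first exact: f_ST.
split; [split; [split; [|split] |] |].
- by rewrite rmorph1.
- by rewrite rmorph0.
- by move=> x y; rewrite rmorphM; apply: TM.
- move=> r t ht; have [u [v [hu e]]] := TO (f r) (f t) ht.
  have [s1 [x [h1 ex]]] := f_frac u; have [s2 [y [h2 ey]]] := f_frac v.
  have [s' [r' [h' e']]] := SO s2 s1 h1.
  have du : f (s' * s2) * u = f (r' * x) by rewrite e' !rmorphM -mulrA ex.
  have dv : f (s' * s2) * v = f (s' * y) by rewrite !rmorphM -mulrA ey.
  have /f_ker/SA [w [hw ew]] : f (r' * x * r - s' * y * t) = 0.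
    by rewrite rmorphB (rmorphM f (r' * x)) (rmorphM f (s' * y)) -du -dv -!mulrA e subrr.
  exists (w * (r' * x)), (w * (s' * y)); split.
    by rewrite rmorphM -du mulrA -rmorphM; apply: T_SM hu; apply: SM hw (SM _ _ h' h2).
  by apply/eqP; rewrite -subr_eq0 -!(mulrA w) -mulrBr ew.
- move=> r t ht e.
  have /(TL _ _ ht) [u [hu eu]] : f r * f t = 0 by rewrite -rmorphM e rmorph0.
  have [s [x [hs ex]]] := f_frac u.
  have /f_ker/SA [w [hw ew]] : f (x * r) = 0 by rewrite rmorphM -ex -mulrA eu mulr0.
  exists (w * x); split; last by rewrite -mulrA.
  by rewrite rmorphM -ex mulrA -rmorphM; apply: T_SM hu; apply: SM.
Qed.

End Preimage.

Arguments Den_l_preimage {R B f a S T}.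

Lemma Den_l_image (R A : nzRingType) (pi : {rmorphism R -> A}) (a D : R -> Prop) :
  (forall x, exists r, x = pi r) -> (forall r, pi r = 0 <-> a r) -> Den_l a D ->
  Den_l (fun x => x = 0) (fun x => exists d, D d /\ x = pi d).
Proof.
move=> pi_surj pi_ker [[[[D1 [D0 DM]] DO] DL] DA].
split; [split; [split; [split; [|split] |] |] |].
- by exists 1; rewrite rmorph1.
- move=> [d [hd /esym/pi_ker/DA [e [he ee]]]].
  by apply: D0; rewrite -ee; apply: DM.
- move=> _ _ [d1 [h1 ->]] [d2 [h2 ->]].
  by exists (d1 * d2); rewrite rmorphM; split=> //; apply: DM.
- move=> x _ [d [hd ->]]; have [r ->] := pi_surj x.
  have [d' [r' [h' e]]] := DO r d hd.
  by exists (pi d'), (pi r'); split; [exists d' | rewrite -!rmorphM e].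
- move=> x _ [d [hd ->]]; have [r ->] := pi_surj x.
  rewrite -rmorphM => /pi_ker/DA [e [he ee]].
  have /(DL _ _ hd) [t [ht et]] : e * r * d = 0 by rewrite -mulrA.
  exists (pi (t * e)); split; first by exists (t * e); split=> //; apply: DM.
  by rewrite -rmorphM -mulrA et rmorph0.
- move=> x; have [r ->] := pi_surj x; split.
    case=> _ [[d [hd ->]]]; rewrite -rmorphM => /pi_ker/DA [e [he ee]].
    by apply/pi_ker/DA; exists (e * d); split; [apply: DM | rewrite -mulrA].
  by move=> e; exists 1; split; [exists 1; rewrite rmorph1 | rewrite e mulr0].
Qed.

Arguments Den_l_image {R A pi a D}.

Lemma left_loc_comp_surj (R A : nzRingType) (pi : {rmorphism R -> A})
    (a D : R -> Prop) (S0 : A -> Prop) (Ql : unitRingType) (tau : {rmorphism A -> Ql}) :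
  (forall x, exists r, x = pi r) -> (forall r, pi r = 0 <-> a r) ->
  Den_l (fun x => x = 0) S0 -> Den_l a D -> (forall r, S0 (pi r) <-> D r) ->
  is_left_loc S0 tau -> is_left_loc D (tau \o pi).
Proof.
move=> pi_surj pi_ker [_ S0A] [_ DA] DE [tu [tfrac tker]].
split; first by move=> s /DE; apply: tu.
split; last by move=> r /=; rewrite tker S0A pi_ker DA.
move=> q; have [x [y [hx ->]]] := tfrac q.
have [r ex] := pi_surj x; have [r' ey] := pi_surj y.
by exists r, r'; split; [apply/DE; rewrite -ex | rewrite /= -ex -ey].
Qed.

Arguments left_loc_comp_surj {R A pi a D S0 Ql tau}.

Section LocalizationOfLocalization.

Variables (R : nzRingType) (a S : R -> Prop) (Q : unitRingType).
Variable sigma : {rmorphism R -> Q}.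
Hypotheses (hS : Den_l a S) (hQ : is_left_loc S sigma).
Variable T : Q -> Prop.
Hypotheses (hT : Den_l (fun q => q = 0) T) (sigma_ST : forall s, S s -> T (sigma s)).
Hypothesis sigma_STV : forall s, S s -> T (sigma s)^-1.

Lemma sigma_ker r : sigma r = 0 <-> a r.
Proof. by rewrite hQ.2.2 hS.2. Qed.

Lemma Den_l_loc_preimage : Den_l a (fun r => T (sigma r)).
Proof.
apply: Den_l_preimage hS hT sigma_ker sigma_ST _ => q.
have [s [r [hs ->]]] := hQ.2.1 q.
by exists s, r; rewrite mulVKr ?hQ.1.
Qed.

Lemma loc_preimage_saturated : S_saturated S (fun r => T (sigma r)).
Proof.
have [[[[_ [_ TM]] _] _] _] := hT; have su := hQ.1.
split=> s r hs; rewrite rmorphM => h.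
  by have := TM _ _ (sigma_STV s hs) h; rewrite mulKr ?su.
by have := TM _ _ h (sigma_STV s hs); rewrite mulrK ?su.
Qed.

Lemma loc_mem_frac q :
  T q <-> exists s t, S s /\ T (sigma t) /\ q = (sigma s)^-1 * sigma t.
Proof.
have [[[[_ [_ TM]] _] _] _] := hT; split=> [Tq | [s [t [hs [ht ->]]]]]; last first.
  by apply: TM => //; apply: sigma_STV.
have [s [r [hs e]]] := hQ.2.1 q; exists s, r; split=> //; split=> //.
by rewrite -[sigma r](mulVKr (hQ.1 _ hs)) -e; apply: TM => //; apply: sigma_ST.
Qed.

Lemma left_loc_comp (Q'' : unitRingType) (tau : {rmorphism Q -> Q''}) :
  is_left_loc T tau -> is_left_loc (fun r => T (sigma r)) (tau \o sigma).
Proof.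
have [[[[_ [_ TM]] _] _] TA] := hT; have [[[_ SO] _] _] := hS.
move=> [tu [tfrac tker]].
split; first by move=> r; apply: tu.
split; last by move=> r /=; rewrite tker TA sigma_ker (Den_l_loc_preimage.2 r).
move=> q; have [t [q' [ht ->]]] := tfrac q.
have [s [t' [hs [ht' ->]]]] := (loc_mem_frac t).1 ht.
have [s2 [r [hs2 ->]]] := hQ.2.1 q'.
have [s' [r' [hs' e]]] := SO s s2 hs2.
have hsu x : S x -> tau (sigma x) \is a GRing.unit by move/sigma_ST; apply: tu.
exists (s' * t'), (r' * r); split.
  by rewrite rmorphM; apply: TM => //; apply: sigma_ST.
have ut' := tu _ ht'.
have ud : tau (sigma s') * tau (sigma t') \is a GRing.unit by rewrite unitrMl // hsu.
rewrite /= !rmorphM !rmorphV ?hQ.1 // invrM ?unitrV ?(hsu _ hs) // invrK.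
apply: (mulrI ud); rewrite [RHS]mulVKr // !mulrA mulrK //.
by rewrite -!rmorphM e !rmorphM mulrK ?hsu.
Qed.

End LocalizationOfLocalization.

Arguments Den_l_loc_preimage {R a S Q sigma} hS hQ {T}.
Arguments left_loc_comp {R a S Q sigma} hS hQ {T} hT sigma_ST sigma_STV {Q'' tau}.

Theorem lemma3p3
  (R : nzRingType) (a : R -> Prop) (S : R -> Prop) (hS : Den_l a S)
  (Q : unitRingType) (sigma : {rmorphism R -> Q}) (hQ : is_left_loc S sigma)
  (A : nzRingType) (pi : {rmorphism R -> A})
  (hpi_surj : forall x : A, exists r, x = pi r)
  (hpi_ker : forall r, pi r = 0 <-> a r) :
  (* (1) *)
  (forall T : Q -> Prop,
     Den_l (fun q : Q => q = 0) T ->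
     (forall s, S s -> T (sigma s)) ->
     (forall s, S s -> T ((sigma s)^-1)) ->
     let T' := fun r : R => T (sigma r) in
     [/\ Den_l a T',
         S_saturated S T',
         (forall q : Q, T q <-> exists s t', S s /\ T' t' /\ q = (sigma s)^-1 * sigma t')
       & forall (Q' : unitRingType) (sigma' : {rmorphism R -> Q'}),
           is_left_loc T' sigma' ->
           (exists psi : {rmorphism Q -> Q'},
              (forall r, psi (sigma r) = sigma' r) /\ injective psi) /\
           (forall (Q'' : unitRingType) (tau : {rmorphism Q -> Q''}),
              is_left_loc T tau ->
              exists phi : {rmorphism Q' -> Q''},
                bijective phi /\ (forall r, phi (sigma' r) = tau (sigma r)))]) /\
  (* (2) *)
  (forall (Sa : R -> Prop) (S0 : A -> Prop),
     largest_Den_l a Sa ->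
     largest_Den_l (fun x : A => x = 0) S0 ->
     [/\ (forall r, S0 (pi r) <-> Sa r),
         (forall x : A, S0 x <-> exists r, Sa r /\ x = pi r)
       & forall (Qa : unitRingType) (siga : {rmorphism R -> Qa}),
           is_left_loc Sa siga ->
           forall (Ql : unitRingType) (tau : {rmorphism A -> Ql}),
             is_left_loc S0 tau ->
             exists phi : {rmorphism Qa -> Ql},
               bijective phi /\ (forall r, phi (siga r) = tau (pi r))]).
Proof.
split.
  move=> T hT hST hSTV T'.
  have hT' : Den_l a T' := Den_l_loc_preimage hS hQ hT hST.
  split=> //; [exact: loc_preimage_saturated | exact: loc_mem_frac |].
  move=> Q' sigma' hQ'; split=> [|Q'' tau htau].
    have ass_ST' r : ass S r <-> ass T' r by rewrite (hS.2 r) (hT'.2 r).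
    have sigma'_S s : S s -> sigma' s \is a GRing.unit by move/hST/hQ'.1.
    have [psi psiE] :
        exists psi : {rmorphism Q -> Q'}, forall r, psi (sigma r) = sigma' r.
      by apply: (left_loc_lift hQ hS.1.1 sigma' sigma'_S) => r /ass_ST'/(hQ'.2.2 r).
    exists psi; split=> //; apply: (left_loc_lift_inj hQ sigma'_S _ psiE).
    by move=> r /(hQ'.2.2 r)/ass_ST'.
  have [phi [phi_bij phiE]] :=
    left_loc_unique hT'.1.1 hQ' (left_loc_comp hS hQ hT hST hSTV htau).
  by exists phi.
move=> Sa S0 [hSa Sa_max] [hS0 S0_max].
have S0_pi D : Den_l a D -> forall r, D r -> S0 (pi r).
  by move=> hD r Dr; apply: (S0_max _ (Den_l_image hpi_surj hpi_ker hD)); exists r.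
have SaE r : S0 (pi r) <-> Sa r.
  split; last exact: S0_pi hSa r.
  apply: (Sa_max _ (Den_l_preimage hS hS0 hpi_ker (S0_pi _ hS) _)) => x.
  have [r' ->] := hpi_surj x; exists 1, r'.
  by rewrite rmorph1 mul1r; split; first exact: hS.1.1.1.1.
split=> // [x | Qa siga hQa Ql tau htau].
  split=> [S0x | [r [hr ->]]]; last exact/SaE.
  by have [r er] := hpi_surj x; exists r; rewrite -SaE -er.
have [phi [phi_bij phiE]] :=
  left_loc_unique hSa.1.1 hQa (left_loc_comp_surj hpi_surj hpi_ker hS0 hSa SaE htau).
by exists phi.
Qed.
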